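(* Let $C_{(\mathcal T,\Psi_{\mathcal T})}$ be a nested Archimedean copula with regularly varying generators, with tree $\mathcal T$ and generators $\psi_v\in\Psi_\infty$, regularly varying with index $-\alpha_v$, $\alpha_v>0$, $v\in\mathcal I$. Recursively define, for $v\in\mathcal V$, $$\Lambda_v(\bm x_{\mathrm{le}(v)})=\begin{cases}x_v,& v\in\mathcal L,\\ \left(\sum_{w\in\mathrm{ch}(v)}\Lambda_w(\bm x_{\mathrm{le}(w)})^{-1/\alpha_v}\right)^{-\alpha_v},& v\in\mathcal I.\end{cases}$$ Then for every $v\in\mathcal V$, the copula $C_v$ admits the tail copula $\Lambda(\cdot;C_v)=\Lambda_v(\cdot)$ on $(0,\infty)^{d(v)}$.
   Context: An Archimedean generator is a continuous, decreasing $\psi:[0,\infty)\to[0,1]$ with $\psi(0)=1$, $\lim_{t\to\infty}\psi(t)=0$, strictly decreasing on $[0,\inf\{t:\psi(t)=0\}]$, with inverse $\psi^{-1}$ ($\psi^{-1}(0)=\inf\{t:\psi(t)=0\}$); $\Psi_\infty$ is the set of completely monotone ones ($(-1)^k\psi^{(k)}\ge0$ for all $k$). $f:(0,\infty)\to(0,\infty)$ is regularly varying with index $\rho$ if $\lim_{x\to\infty}f(tx)/f(x)=t^\rho$ for all $t>0$. Let $\mathcal T=(\mathcal V,\mathcal E)$ be a rooted tree with root $r$, leaf set $\mathcal L=\{1,\dots,d\}$, internal vertices $\mathcal I=\mathcal V\setminus\mathcal L$; $\mathrm{pa}(v)$ is the parent of $v$, $\mathrm{ch}(v)$ the set of children,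 $\mathrm{le}(v)$ the set of leaves of the subtree rooted at $v$ (with $\mathrm{le}(v)=\{v\}$ for leaves), $d(v)=|\mathrm{le}(v)|$. Given generators $\Psi_{\mathcal T}=\{\psi_v\}_{v\in\mathcal I}\subseteq\Psi_\infty$, recursively set $C_v(\bm u_{\mathrm{le}(v)})=u_v$ for $v\in\mathcal L$ and $C_v(\bm u_{\mathrm{le}(v)})=\psi_v\left(\sum_{w\in\mathrm{ch}(v)}\psi_v^{-1}(C_w(\bm u_{\mathrm{le}(w)}))\right)$ for $v\in\mathcal I$; the nested Archimedean copula is $C_{(\mathcal T,\Psi_{\mathcal T})}=C_r$. It is assumed that the sufficient nesting condition holds: $(\psi_{\mathrm{pa}(v)}^{-1}\circ\psi_v)'$ is completely monotone for every $v\in\mathcal I\setminus\{r\}$. It has regularly varying generators if each $\psi_v$, $v\in\mathcal I$, is regularly varying with index $-\alpha_v$ for some $\alpha_v>0$. The tail copula of a copula $C$ in dimension $k$ is $\Lambda(\bm x;C)=\lim_{t\downarrow0}C(t\bm x)/t$, $\bm x\in(0,\infty)^k$. *)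

From Stdlib Require Import Reals Lra List ClassicalEpsilon Permutation.
From Coquelicot Require Import Coquelicot.
Open Scope R_scope.

(** Archimedean generator psi : [0,oo) -> [0,1] (values outside [0,oo) are irrelevant). *)
Definition is_generator (psi : R -> R) : Prop :=
  (forall t, 0 < t -> continuous psi t) /\
  filterlim psi (at_right 0) (locally (psi 0)) /\
  (forall t, 0 <= t -> 0 <= psi t <= 1) /\
  (forall s t, 0 <= s -> s <= t -> psi t <= psi s) /\
  psi 0 = 1 /\
  is_lim psi p_infty (Finite 0) /\
  (* strictly decreasing on [0, inf {t : psi t = 0}] (inf of the empty set = +oo) *)
  (forall s t, 0 <= s -> s < t ->
     (forall z, 0 <= z -> psi z = 0 -> t <= z) -> psi t < psi s).

(** Inverse of a generator: the (unique, for u in (0,1]) t >= 0 with psi t = u.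
    For completely monotone generators psi > 0, so psi^{-1}(0) = +oo in the paper;
    here psi^{-1}(0) is an unspecified real (irrelevant for tail copulas). *)
Definition ginv (psi : R -> R) (u : R) : R :=
  epsilon (inhabits 0) (fun t => 0 <= t /\ psi t = u).

Definition completely_monotone (f : R -> R) : Prop :=
  forall (k : nat) (t : R), 0 < t ->
    ex_derive_n f k t /\ 0 <= (-1) ^ k * Derive_n f k t.

Definition regularly_varying (f : R -> R) (rho : R) : Prop :=
  (forall x, 0 < x -> 0 < f x) /\
  forall t, 0 < t ->
    is_lim (fun x => f (t * x) / f x) p_infty (Finite (Rpower t rho)).

Definition nesting_condition (psi_p psi_c : R -> R) : Prop :=
  (forall t, 0 < t -> ex_derive (fun s => ginv psi_p (psi_c s)) t) /\
  completely_monotone (Derive (fun s => ginv psi_p (psi_c s))).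

Inductive tree : Type :=
  | Leaf (i : nat)
  | Node (psi : R -> R) (alpha : R) (ch : list tree).

(** Vertices of a tree = subtrees rooted at them. [subtree s T]: s is the subtree
    rooted at some vertex of T. *)
Inductive subtree : tree -> tree -> Prop :=
  | subtree_refl T : subtree T T
  | subtree_child s c psi a ch : In c ch -> subtree s c -> subtree s (Node psi a ch).

Fixpoint leaves (T : tree) : list nat :=
  match T with
  | Leaf i => i :: nil
  | Node _ _ ch =>
      (fix go (l : list tree) : list nat :=
         match l with nil => nil | c :: l' => leaves c ++ go l' end) ch
  end.

Fixpoint nac (T : tree) (u : nat -> R) : R :=
  match T with
  | Leaf i => u i
  | Node psi _ ch =>
      psi ((fix go (l : list tree) : R :=
              match l with nil => 0 | c :: l' => ginv psi (nac c u) + go l' end) ch)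
  end.

Fixpoint tailL (T : tree) (x : nat -> R) : R :=
  match T with
  | Leaf i => x i
  | Node _ a ch =>
      Rpower ((fix go (l : list tree) : R :=
                 match l with
                 | nil => 0
                 | c :: l' => Rpower (tailL c x) (- / a) + go l' end) ch) (- a)
  end.

Definition has_tail_value (C : (nat -> R) -> R) (x : nat -> R) (L : R) : Prop :=
  filterlim (fun t => C (fun i => t * x i) / t) (at_right 0) (locally L).

Definition NAC_regvar (d : nat) (T : tree) : Prop :=
  Permutation (leaves T) (seq 1 d) /\
  forall psi a ch, subtree (Node psi a ch) T ->
    ch <> nil /\
    is_generator psi /\ completely_monotone psi /\
    0 < a /\ regularly_varying psi (- a) /\
    (forall psi' a' ch', In (Node psi' a' ch') ch -> nesting_condition psi psi').

From Stdlib Require Import Reals List Lra ClassicalEpsilon.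
From Coquelicot Require Import Coquelicot.
Open Scope R_scope.

(* Let g := psi^{-1}, so that psi (g t) = t and g t -> +oo as t -> 0+.  Regular variation gives
   psi (l * g t) / t -> l^{-a} for every l > 0.  As psi is monotone and l |-> l^{-a} is a
   decreasing bijection of (0,oo), this transfers in both directions: C(t)/t -> L forces
   g(C(t)) / g(t) -> L^{-1/a}, and h(t) / g(t) -> m forces psi(h(t)) / t -> m^{-a}.  At an
   internal vertex v the ratios g(C_w(t x)) / g(t) of the children add up to
   sum_w Lambda_w(x)^{-1/a}, and applying psi gives Lambda_v(x); induction on the tree concludes. *)

Lemma filterlim_eventually_lt {T} {F : (T -> Prop) -> Prop} {FF : Filter F}
    (f : T -> R) (L l : R) :
  filterlim f F (locally L) -> L < l -> F (fun t => f t < l).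
Proof.
  intros Hf HLl. rewrite filterlim_locally in Hf.
  generalize (Hf (mkposreal (l - L) ltac:(lra))). apply filter_imp. intros t Ht.
  change (Rabs (f t - L) < l - L) in Ht. apply Rabs_def2 in Ht. lra.
Qed.

Lemma filterlim_eventually_gt {T} {F : (T -> Prop) -> Prop} {FF : Filter F}
    (f : T -> R) (L l : R) :
  filterlim f F (locally L) -> l < L -> F (fun t => l < f t).
Proof.
  intros Hf HlL. rewrite filterlim_locally in Hf.
  generalize (Hf (mkposreal (L - l) ltac:(lra))). apply filter_imp. intros t Ht.
  change (Rabs (f t - L) < L - l) in Ht. apply Rabs_def2 in Ht. lra.
Qed.

Lemma filterlim_of_eventually_bounds {T} {F : (T -> Prop) -> Prop} {FF : Filter F}
    (f : T -> R) (L : R) :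
  0 < L ->
  (forall l, L < l -> F (fun t => f t < l)) ->
  (forall l, 0 < l < L -> F (fun t => l < f t)) ->
  filterlim f F (locally L).
Proof.
  intros HL Hup Hlow. apply filterlim_locally. intros [eps Heps].
  assert (Hmax : 0 < Rmax (L - eps) (L / 2) < L).
  { pose proof (Rmax_r (L - eps) (L / 2)). split; [lra|].
    apply Rmax_lub_lt; lra. }
  pose proof (Hup (L + eps) ltac:(lra)) as Hupper.
  generalize (filter_and _ _ Hupper (Hlow _ Hmax)).
  apply filter_imp. intros t [Hlt Hgt]. pose proof (Rmax_l (L - eps) (L / 2)).
  change (Rabs (f t - L) < eps). apply Rabs_def1; lra.
Qed.

Lemma at_right_0_lt (c : R) : 0 < c -> at_right 0 (fun t => 0 < t < c).
Proof.
  intros Hc. exists (mkposreal c Hc). intros t Ht Ht0.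
  change (Rabs (t - 0) < c) in Ht. rewrite Rminus_0_r, Rabs_right in Ht; lra.
Qed.

(* Keeps the argument of [ginv] in (0,1], the only range where it is a genuine inverse. *)
Lemma tail_eventually_in_unit (f : R -> R) (L : R) :
  0 < L -> filterlim (fun t => f t / t) (at_right 0) (locally L) ->
  at_right 0 (fun t => 0 < f t <= 1).
Proof.
  intros HL Hf.
  assert (Hc : 0 < / (L + 1)) by (apply Rinv_0_lt_compat; lra).
  pose proof (filterlim_eventually_gt _ _ 0 Hf HL) as Hpos.
  pose proof (filterlim_eventually_lt _ _ (L + 1) Hf (Rlt_n_Sn L)) as Hbound.
  generalize (filter_and _ _ (at_right_0_lt _ Hc) (filter_and _ _ Hpos Hbound)).
  apply filter_imp. intros t ([Ht Htc] & Hft & Hftb).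
  apply Rlt_div_l in Hftb; [|lra]. apply Rlt_div_r in Hft; [|lra].
  apply (Rmult_lt_compat_r (L + 1)) in Htc; [|lra].
  rewrite Rinv_l in Htc by lra. lra.
Qed.

Lemma Rpower_Ropp_lt (a x y : R) : 0 < a -> 0 < x < y -> Rpower y (- a) < Rpower x (- a).
Proof.
  intros Ha Hxy. rewrite !Rpower_Ropp. apply Rinv_lt_contravar.
  - apply Rmult_lt_0_compat; apply exp_pos.
  - apply Rlt_Rpower_l; auto.
Qed.

Lemma Rpower_Rpower_inv (x b c : R) : 0 < x -> b * c = 1 -> Rpower (Rpower x b) c = x.
Proof. intros Hx Hbc. rewrite Rpower_mult, Hbc. apply Rpower_1; auto. Qed.

Definition sum_list (l : list R) : R := fold_right Rplus 0 l.

Lemma sum_list_map_pos {A} (f : A -> R) (l : list A) :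
  l <> nil -> (forall c, 0 < f c) -> 0 < sum_list (map f l).
Proof.
  intros Hl Hf. destruct l as [|c l]; [congruence|]. clear Hl. simpl.
  enough (0 <= sum_list (map f l)) by (pose proof (Hf c); lra).
  induction l as [|c' l IH]; simpl; [lra|]. pose proof (Hf c'). lra.
Qed.

Lemma sum_list_map_Rdiv {A} (f : A -> R) (l : list A) (d : R) :
  sum_list (map f l) / d = sum_list (map (fun c => f c / d) l).
Proof. induction l as [|c l IH]; simpl; rewrite <- ?IH; unfold Rdiv; ring. Qed.

Lemma filterlim_sum_list {T A} {F : (T -> Prop) -> Prop} {FF : Filter F}
    (f : A -> T -> R) (m : A -> R) (l : list A) :
  (forall c, In c l -> filterlim (f c) F (locally (m c))) ->
  filterlim (fun t => sum_list (map (fun c => f c t) l)) F (locally (sum_list (map m l))).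
Proof.
  induction l as [|c l IH]; intros Hl; simpl.
  - apply filterlim_const.
  - eapply filterlim_comp_2;
      [apply Hl; left; reflexivity | apply IH; intros; apply Hl; right; auto |].
    apply (@filterlim_plus R_AbsRing R_NormedModule).
Qed.

Definition tree_nested_ind (P : tree -> Prop) (HLeaf : forall i, P (Leaf i))
  (HNode : forall psi a ch, (forall c, In c ch -> P c) -> P (Node psi a ch)) :
  forall T, P T :=
  fix IH T := match T with
  | Leaf i => HLeaf i
  | Node psi a ch => HNode psi a ch
      ((fix go (l : list tree) : forall c, In c l -> P c :=
          match l with
          | nil => fun c H => False_ind _ H
          | c0 :: l' => fun c H => match H with
                                  | or_introl e => eq_ind c0 P (IH c0) c e
                                  | or_intror H' => go l' c H'
                                  end
          end) ch)
  end.

Lemma subtree_trans (s t u : tree) : subtree s t -> subtree t u -> subtree s u.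
Proof. intros Hst Htu. induction Htu; auto. eapply subtree_child; eauto. Qed.

Lemma leaves_Node (psi : R -> R) (a : R) (ch : list tree) (c : tree) (i : nat) :
  In c ch -> In i (leaves c) -> In i (leaves (Node psi a ch)).
Proof.
  intros Hc Hi. simpl. induction ch as [|c0 l IH]; [destruct Hc|].
  apply in_or_app. destruct Hc as [->|Hc]; auto.
Qed.

Lemma nac_Node (psi : R -> R) (a : R) (ch : list tree) (u : nat -> R) :
  nac (Node psi a ch) u = psi (sum_list (map (fun c => ginv psi (nac c u)) ch)).
Proof. simpl. f_equal. induction ch as [|c l IH]; simpl; congruence. Qed.

Lemma tailL_Node (psi : R -> R) (a : R) (ch : list tree) (x : nat -> R) :
  tailL (Node psi a ch) x = Rpower (sum_list (map (fun c => Rpower (tailL c x) (- / a)) ch)) (- a).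
Proof. simpl. f_equal. induction ch as [|c l IH]; simpl; congruence. Qed.

Lemma tailL_pos (v : tree) (x : nat -> R) :
  (forall i, In i (leaves v) -> 0 < x i) -> 0 < tailL v x.
Proof. destruct v as [i|psi a ch]; intros Hx; [apply Hx; left; reflexivity | apply exp_pos]. Qed.

Lemma tail_value_Leaf (i : nat) (x : nat -> R) : has_tail_value (nac (Leaf i)) x (x i).
Proof.
  unfold has_tail_value. simpl. apply (filterlim_ext_loc (fun _ => x i)); [|apply filterlim_const].
  generalize (at_right_0_lt 1 Rlt_0_1). apply filter_imp. intros t Ht. field. lra.
Qed.

Section Generator.

Variables (psi : R -> R) (a : R).
Hypotheses (Hgen : is_generator psi) (Hrv : regularly_varying psi (- a)) (Ha : 0 < a).

Lemma psi_pos (t : R) : 0 <= t -> 0 < psi t.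
Proof.
  intros Ht. destruct Hgen as (_ & _ & _ & _ & H0 & _). destruct Hrv as [Hpos _].
  destruct (Req_dec t 0) as [->|Hnz]; [rewrite H0; lra | apply Hpos; lra].
Qed.

Lemma psi_le_1 (t : R) : 0 <= t -> psi t <= 1.
Proof. destruct Hgen as (_ & _ & H & _). apply H. Qed.

Lemma psi_antimono (s t : R) : 0 <= s -> s <= t -> psi t <= psi s.
Proof. destruct Hgen as (_ & _ & _ & H & _). apply H. Qed.

Lemma ginv_exists (u : R) : 0 < u <= 1 -> exists t, 0 <= t /\ psi t = u.
Proof.
  intros Hu. destruct Hgen as (Hcont & Hright & _ & _ & H0 & Hinf & _).
  destruct (Req_dec u 1) as [->|Hu1]; [exists 0; split; [lra | exact H0]|].
  rewrite H0 in Hright.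
  assert (Hu' : u < 1) by lra.
  pose proof (filterlim_eventually_gt _ _ u Hright Hu') as Hnear0.
  destruct (filter_ex _ (filter_and _ _ (at_right_0_lt 1 Rlt_0_1) Hnear0)) as [s [Hs Hus]].
  destruct (filterlim_eventually_lt psi 0 u Hinf (proj1 Hu)) as [M HM].
  set (b := Rmax M s + 1).
  assert (Hb : M < b /\ s < b)
    by (unfold b; split; [pose proof (Rmax_l M s) | pose proof (Rmax_r M s)]; lra).
  destruct (Ranalysis5.IVT_interv (fun t => u - psi t) s b) as [z [Hz Hpz]].
  - intros t Ht. apply continuity_pt_minus.
    + apply continuity_pt_const. intros ? ?. reflexivity.
    + apply continuity_pt_filterlim, Hcont. lra.
  - lra.
  - lra.
  - pose proof (HM b (proj1 Hb)). lra.
  - exists z. split; lra.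
Qed.

Lemma ginv_spec (u : R) : 0 < u <= 1 -> 0 <= ginv psi u /\ psi (ginv psi u) = u.
Proof.
  intros Hu. apply (epsilon_spec (inhabits 0) (fun t => 0 <= t /\ psi t = u)).
  apply ginv_exists; auto.
Qed.

Lemma ginv_lt_of_psi_lt (u s : R) : 0 < u <= 1 -> 0 <= s -> psi s < u -> ginv psi u < s.
Proof.
  intros Hu Hs Hsu. destruct (ginv_spec u Hu) as [Hg Hpg].
  destruct (Rlt_or_le (ginv psi u) s) as [|Hle]; auto.
  pose proof (psi_antimono s (ginv psi u) Hs Hle). lra.
Qed.

Lemma lt_ginv_of_lt_psi (u s : R) : 0 < u <= 1 -> u < psi s -> s < ginv psi u.
Proof.
  intros Hu Hus. destruct (ginv_spec u Hu) as [Hg Hpg].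
  destruct (Rlt_or_le s (ginv psi u)) as [|Hle]; auto.
  pose proof (psi_antimono (ginv psi u) s Hg Hle). lra.
Qed.

Lemma ginv_tends_to_infinity : filterlim (ginv psi) (at_right 0) (Rbar_locally p_infty).
Proof.
  intros P [M HM]. unfold filtermap. set (M' := Rmax M 0).
  assert (HM' : 0 <= M') by apply Rmax_r.
  pose proof (psi_le_1 M' HM').
  generalize (at_right_0_lt (psi M') (psi_pos M' HM')). apply filter_imp. intros t Ht.
  apply HM. pose proof (Rmax_l M 0).
  pose proof (lt_ginv_of_lt_psi t M' ltac:(lra) ltac:(lra)). unfold M' in *. lra.
Qed.

Lemma ginv_eventually_pos : at_right 0 (fun t => 0 < ginv psi t).
Proof. apply ginv_tends_to_infinity. exists 0. auto. Qed.

Lemma psi_scaled_ginv_limit (l : R) : 0 < l ->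
  filterlim (fun t => psi (l * ginv psi t) / t) (at_right 0) (locally (Rpower l (- a))).
Proof.
  intros Hl. destruct Hrv as [_ Hlim].
  apply (filterlim_ext_loc (fun t => psi (l * ginv psi t) / psi (ginv psi t))).
  - generalize (at_right_0_lt 1 Rlt_0_1). apply filter_imp. intros t Ht.
    destruct (ginv_spec t ltac:(lra)) as [_ ->]. reflexivity.
  - exact (filterlim_comp _ _ _ (ginv psi) (fun x => psi (l * x) / psi x) _ _ _
             ginv_tends_to_infinity (Hlim l Hl)).
Qed.

Lemma ginv_lt_scaled_of_tail (f : R -> R) (L l : R) :
  0 < L -> filterlim (fun t => f t / t) (at_right 0) (locally L) ->
  0 < l -> Rpower l (- a) < L ->
  at_right 0 (fun t => ginv psi (f t) < l * ginv psi t).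
Proof.
  intros HL Hf Hl Hla. set (m := (Rpower l (- a) + L) / 2).
  pose proof (filterlim_eventually_lt _ _ m (psi_scaled_ginv_limit l Hl)
                ltac:(unfold m; lra)) as Hpsi.
  pose proof (filterlim_eventually_gt _ _ m Hf ltac:(unfold m; lra)) as Hft.
  generalize (filter_and _ _ (at_right_0_lt 1 Rlt_0_1) (filter_and _ _ ginv_eventually_pos
    (filter_and _ _ (tail_eventually_in_unit f L HL Hf) (filter_and _ _ Hpsi Hft)))).
  apply filter_imp. intros t ([Ht _] & Hg & Hu & H1 & H2).
  apply ginv_lt_of_psi_lt; auto; [nra|].
  apply (Rmult_lt_reg_r (/ t)); [apply Rinv_0_lt_compat; lra | fold (f t / t); lra].
Qed.

Lemma scaled_lt_ginv_of_tail (f : R -> R) (L l : R) :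
  0 < L -> filterlim (fun t => f t / t) (at_right 0) (locally L) ->
  0 < l -> L < Rpower l (- a) ->
  at_right 0 (fun t => l * ginv psi t < ginv psi (f t)).
Proof.
  intros HL Hf Hl Hla. set (m := (Rpower l (- a) + L) / 2).
  pose proof (filterlim_eventually_gt _ _ m (psi_scaled_ginv_limit l Hl)
                ltac:(unfold m; lra)) as Hpsi.
  pose proof (filterlim_eventually_lt _ _ m Hf ltac:(unfold m; lra)) as Hft.
  generalize (filter_and _ _ (at_right_0_lt 1 Rlt_0_1)
    (filter_and _ _ (tail_eventually_in_unit f L HL Hf) (filter_and _ _ Hpsi Hft))).
  apply filter_imp. intros t ([Ht _] & Hu & H1 & H2).
  apply lt_ginv_of_lt_psi; auto.
  apply (Rmult_lt_reg_r (/ t)); [apply Rinv_0_lt_compat; lra | fold (f t / t); lra].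
Qed.

Lemma psi_lt_of_scaled_lt (h : R -> R) (k l : R) :
  0 < k -> Rpower k (- a) < l ->
  at_right 0 (fun t => k * ginv psi t < h t) ->
  at_right 0 (fun t => psi (h t) / t < l).
Proof.
  intros Hk Hkl Hh.
  pose proof (filterlim_eventually_lt _ _ l (psi_scaled_ginv_limit k Hk) Hkl) as Hpsi.
  generalize (filter_and _ _ (at_right_0_lt 1 Rlt_0_1)
    (filter_and _ _ ginv_eventually_pos (filter_and _ _ Hh Hpsi))).
  apply filter_imp. intros t ([Ht _] & Hg & H1 & H2).
  pose proof (psi_antimono (k * ginv psi t) (h t) ltac:(nra) (Rlt_le _ _ H1)).
  apply (Rle_lt_trans _ (psi (k * ginv psi t) / t)); auto.
  apply Rmult_le_compat_r; [apply Rlt_le, Rinv_0_lt_compat|]; lra.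
Qed.

Lemma lt_psi_of_lt_scaled (h : R -> R) (k l : R) :
  0 < k -> l < Rpower k (- a) ->
  at_right 0 (fun t => 0 <= h t < k * ginv psi t) ->
  at_right 0 (fun t => l < psi (h t) / t).
Proof.
  intros Hk Hkl Hh.
  pose proof (filterlim_eventually_gt _ _ l (psi_scaled_ginv_limit k Hk) Hkl) as Hpsi.
  generalize (filter_and _ _ (at_right_0_lt 1 Rlt_0_1) (filter_and _ _ Hh Hpsi)).
  apply filter_imp. intros t ([Ht _] & [H0 H1] & H2).
  pose proof (psi_antimono (h t) (k * ginv psi t) H0 (Rlt_le _ _ H1)).
  apply (Rlt_le_trans _ (psi (k * ginv psi t) / t)); auto.
  apply Rmult_le_compat_r; [apply Rlt_le, Rinv_0_lt_compat|]; lra.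
Qed.

Lemma ginv_ratio_of_tail (f : R -> R) (L : R) :
  0 < L -> filterlim (fun t => f t / t) (at_right 0) (locally L) ->
  filterlim (fun t => ginv psi (f t) / ginv psi t) (at_right 0) (locally (Rpower L (- / a))).
Proof.
  intros HL Hf.
  assert (HLmu : Rpower (Rpower L (- / a)) (- a) = L)
    by (apply Rpower_Rpower_inv; auto; field; lra).
  apply filterlim_of_eventually_bounds; [apply exp_pos | intros l Hl | intros l Hl].
  - assert (Hl0 : 0 < l) by (apply (Rlt_trans _ (Rpower L (- / a))); [apply exp_pos | exact Hl]).
    assert (Hla : Rpower l (- a) < L).
    { rewrite <- HLmu. apply Rpower_Ropp_lt; auto. split; auto. apply exp_pos. }
    generalize (filter_and _ _ ginv_eventually_pos (ginv_lt_scaled_of_tail f L l HL Hf Hl0 Hla)).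
    apply filter_imp. intros t [Hg H]. apply Rlt_div_l; auto.
  - assert (Hla : L < Rpower l (- a)) by (rewrite <- HLmu; apply Rpower_Ropp_lt; auto).
    generalize (filter_and _ _ ginv_eventually_pos
      (scaled_lt_ginv_of_tail f L l HL Hf (proj1 Hl) Hla)).
    apply filter_imp. intros t [Hg H]. apply Rlt_div_r; auto.
Qed.

Lemma psi_tail_of_ginv_ratio (h : R -> R) (mu : R) :
  0 < mu -> filterlim (fun t => h t / ginv psi t) (at_right 0) (locally mu) ->
  filterlim (fun t => psi (h t) / t) (at_right 0) (locally (Rpower mu (- a))).
Proof.
  intros Hmu Hh. set (nu := Rpower mu (- a)).
  assert (Hnu : 0 < nu) by apply exp_pos.
  assert (Hmu_nu : Rpower nu (- / a) = mu) by (apply Rpower_Rpower_inv; auto; field; lra).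
  apply filterlim_of_eventually_bounds; auto; intros l Hl;
    set (k := Rpower ((l + nu) / 2) (- / a));
    (assert (Hk : Rpower k (- a) = (l + nu) / 2) by (apply Rpower_Rpower_inv; [lra | field; lra]));
    assert (Hk0 : 0 < k) by apply exp_pos.
  - apply (psi_lt_of_scaled_lt h k); [auto | lra |].
    assert (Hkmu : k < mu).
    { rewrite <- Hmu_nu. apply Rpower_Ropp_lt; [apply Rinv_0_lt_compat |]; lra. }
    generalize (filter_and _ _ ginv_eventually_pos (filterlim_eventually_gt _ _ k Hh Hkmu)).
    apply filter_imp. intros t [Hg H]. apply Rlt_div_r; auto.
  - apply (lt_psi_of_lt_scaled h k); [auto | lra |].
    assert (Hkmu : mu < k).
    { rewrite <- Hmu_nu. apply Rpower_Ropp_lt; [apply Rinv_0_lt_compat |]; lra. }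
    pose proof (filterlim_eventually_gt _ _ 0 Hh Hmu) as Hpos.
    generalize (filter_and _ _ ginv_eventually_pos
      (filter_and _ _ Hpos (filterlim_eventually_lt _ _ k Hh Hkmu))).
    apply filter_imp. intros t (Hg & H0 & H).
    apply Rlt_div_r in H0; auto. apply Rlt_div_l in H; auto. lra.
Qed.

Lemma tail_value_Node (ch : list tree) (x : nat -> R) :
  ch <> nil ->
  (forall c, In c ch -> has_tail_value (nac c) x (tailL c x) /\ 0 < tailL c x) ->
  has_tail_value (nac (Node psi a ch)) x (tailL (Node psi a ch) x).
Proof.
  intros Hne Hch. unfold has_tail_value. rewrite tailL_Node.
  apply (filterlim_ext (fun t => psi (sum_list
           (map (fun c => ginv psi (nac c (fun i => t * x i))) ch)) / t));
    [intros t; rewrite nac_Node; reflexivity |].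
  apply psi_tail_of_ginv_ratio; auto; [apply sum_list_map_pos; auto; intros; apply exp_pos |].
  apply (filterlim_ext (fun t => sum_list
           (map (fun c => ginv psi (nac c (fun i => t * x i)) / ginv psi t) ch)));
    [intros t; symmetry; apply sum_list_map_Rdiv |].
  apply filterlim_sum_list. intros c Hc. destruct (Hch c Hc) as [Hlim Hpos].
  apply ginv_ratio_of_tail; auto.
Qed.

End Generator.

Theorem proposition4p5 (d : nat) (T : tree) :
  NAC_regvar d T ->
  forall v : tree, subtree v T ->
  forall x : nat -> R, (forall i, In i (leaves v) -> 0 < x i) ->
    has_tail_value (nac v) x (tailL v x).
Proof.
  intros [_ Hnodes] v. induction v as [i | psi a ch IH] using tree_nested_ind;
    intros Hv x Hx; [apply tail_value_Leaf |].
  destruct (Hnodes psi a ch Hv) as (Hne & Hgen & _ & Ha & Hrv & _).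
  apply tail_value_Node; auto. intros c Hc.
  assert (Hxc : forall i, In i (leaves c) -> 0 < x i) by eauto using leaves_Node.
  split; [|apply tailL_pos; exact Hxc].
  apply IH; auto. apply (subtree_trans _ (Node psi a ch)); auto.
  apply (subtree_child _ c); auto. apply subtree_refl.
Qed.
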